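(* Let $\nu$ be a class (ii) distribution with associated functions $f,\varphi,\Phi$, let $\theta>1$, and suppose that for all constants $\alpha\ge0$ and $s\in(0,1)$, \[\liminf_{x\to\infty}\frac{\Phi^{-1}(\varphi(x)-\alpha\log x)}{x^s}>0.\] Let $\eta$ be a distribution with density $g$ such that $\liminf_{x\to\infty}x^{t+1}g(x)>0$ for some $t\in(1,\theta)$. Then $D_{F_\Phi}(\eta|\nu)=\infty$. Moreover, the displayed condition holds whenever $\nu$ is a generalized lognormal distribution with $r>1$ and $\Phi(x)=\frac{1}{r\sigma^r}\log(x)^r$.
   Context: Densities are written $f=e^{-\varphi}$. For strictly convex $F$ with $F(1)=0$, $D_F(\eta|\nu)=\int_0^\infty F(g/f)f\,dx$ if $\eta\ll\nu$ and $+\infty$ otherwise. Class (ii): $\lim_{x\to\infty}\varphi(x)/x=0$, $\lim_{x\to\infty}\varphi(x)/\log x=\infty$, and there exist $\bar x>0$ and $\Phi:\mathbb R_+\to\mathbb R$ positive, strictly concave, twice differentiable and increasing on $[\bar x,\infty)$ such that, with $\Phi^{-1}$ the inverse of $\Phi|_{[\bar x,\infty)}$, $0<\liminf_{x\to\infty}\Phi^{-1}(\varphi(x))/x\le\limsup_{x\to\infty}\Phi^{-1}(\varphi(x))/x<\infty$. With $\bar y=\exp(\Phi(\bar x))$: $F_\Phi(y)=y\log y$ for $y\le\bar y$ and $F_\Phi(y)=a\,y\,\Phi^{-1}(\log y)^\theta+b$ for $y>\bar y$, where $a=\frac{1+\log\bar y}{\Phi^{-1}(\log\bar y)^\theta+\theta\Phi^{-1}(\log\bar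 y)^{\theta-1}(\Phi^{-1})'(\log\bar y)}$, $b=\bar y\log\bar y-a\bar y\Phi^{-1}(\log\bar y)^\theta$. The generalized lognormal density is $f(x)=\frac{1}{Zx}\exp(-\frac{1}{r\sigma^r}|\log x-\mu|^r)$, $x>0$, with $Z=2r^{1/r}\sigma\Gamma(1+1/r)$, $r>1$, $\sigma>0$, $\mu\in\mathbb R$. *)

From Stdlib Require Import Reals Lra.
Open Scope R_scope.

(* real power x^p for x >= 0, with the convention 0^p = 0 (p > 0) *)
Definition rpow (x p : R) : R :=
  if Req_EM_T x 0 then 0 else Rpower x p.

Definition liminf_pos (h : R -> R) : Prop :=
  exists c, 0 < c /\ exists X, forall x, X <= x -> c <= h x.

Definition limsup_finite (h : R -> R) : Prop :=
  exists C X, forall x, X <= x -> h x <= C.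

Definition lim_infty_zero (h : R -> R) : Prop :=
  forall eps, 0 < eps -> exists X, forall x, X <= x -> Rabs (h x) < eps.

Definition lim_infty_infty (h : R -> R) : Prop :=
  forall M, exists X, forall x, X <= x -> M < h x.

(* Class (ii) assumptions on phi, with the auxiliary Phi (on [xbar,oo)),
   its inverse Phiinv on Phi([xbar,oo)) = [Phi xbar, oo), and the one-sided
   derivative dPi of Phiinv at Phi xbar = log ybar. *)
Definition class_ii (phi Phi Phiinv : R -> R) (xbar dPi : R) : Prop :=
  lim_infty_zero (fun x => phi x / x) /\
  lim_infty_infty (fun x => phi x / ln x) /\
  0 < xbar /\
  (forall x, xbar <= x -> 0 < Phi x) /\
  (forall x y, xbar <= x -> x < y -> Phi x < Phi y) /\
  (forall x y l, xbar <= x -> x < y -> 0 < l < 1 ->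
       l * Phi x + (1 - l) * Phi y < Phi (l * x + (1 - l) * y)) /\
  (exists dPhi d2Phi : R -> R,
       (forall x, xbar <= x -> derivable_pt_lim Phi x (dPhi x)) /\
       (forall x, xbar < x -> derivable_pt_lim dPhi x (d2Phi x))) /\
  (forall y, Phi xbar <= y -> xbar <= Phiinv y /\ Phi (Phiinv y) = y) /\
  (forall eps, 0 < eps -> exists delta, 0 < delta /\ forall h, 0 < h < delta ->
       Rabs ((Phiinv (Phi xbar + h) - Phiinv (Phi xbar)) / h - dPi) < eps) /\
  liminf_pos (fun x => Phiinv (phi x) / x) /\
  limsup_finite (fun x => Phiinv (phi x) / x).

Definition FPhi (Phi Phiinv : R -> R) (xbar dPi theta : R) (y : R) : R :=
  let ybar := exp (Phi xbar) in
  let p0 := Phiinv (ln ybar) in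
  let a := (1 + ln ybar) /
           (rpow p0 theta + theta * rpow p0 (theta - 1) * dPi) in
  let b := ybar * ln ybar - a * ybar * rpow p0 theta in
  if Rle_dec y ybar then y * ln y
  else a * y * rpow (Phiinv (ln y)) theta + b.

(* D_F(eta|nu) = +oo, for densities g (of eta) and f > 0 (of nu) on (0,oo):
   the integrand F(g/f) f admits step-function minorants on compact
   subintervals of (0,oo) with arbitrarily large integral. *)
Definition divergence_infinite (F g f : R -> R) : Prop :=
  forall M, exists a b, 0 < a /\ a <= b /\
    exists psi : StepFun a b,
      (forall x, a <= x <= b -> psi x <= F (g x / f x) * f x) /\
      M <= RiemannInt_SF psi.

(* For large x the integrand F_Phi(g/f) f is bounded below by a multiple of 1/x,
   which is not integrable at infinity.  Indeed g/f >= exp(phi(x) - (t+2) log x)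
   lies beyond ybar, so F_Phi(g/f) f = a g Phi^-1(log(g/f))^theta + b f.  The growth
   hypothesis with alpha = t+2 gives Phi^-1(log(g/f)) >= c' x^s, and choosing
   s theta >= t makes the first term at least a multiple of x^-(t+1) x^(s theta) >= 1/x,
   while b f = O(x^-2) because phi grows faster than log.
   For the generalized lognormal law, phi(x) - alpha log x equals
   log Z + (1 - alpha) log x + |log x - mu|^r / (r sigma^r) and Phi(p) = (log p)^r / (r sigma^r);
   as r > 1, |v - mu|^r exceeds (s v)^r by a multiple of v^r, which beats every
   linear term, so Phi^-1(phi(x) - alpha log x) >= x^s eventually. *)

From Stdlib Require Import Reals Lra.
Open Scope R_scope.

Lemma exp_le_compat (x y : R) : x <= y -> exp x <= exp y.
Proof. intros [H | <-]; [left; apply exp_increasing | right]; easy. Qed.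

Lemma ln_le_compat (x y : R) : 0 < x -> x <= y -> ln x <= ln y.
Proof. intros Hx [H | <-]; [left; apply ln_increasing | right]; easy. Qed.

Lemma Rpower_pos (x p : R) : 0 < Rpower x p.
Proof. apply exp_pos. Qed.

Lemma rpow_Rpower (x p : R) : 0 < x -> rpow x p = Rpower x p.
Proof. intros Hx. unfold rpow. destruct (Req_EM_T x 0); [lra | easy]. Qed.

Definition eventually (P : R -> Prop) : Prop := exists X, forall x, X <= x -> P x.

Lemma eventually_ge (X : R) : eventually (fun x => X <= x).
Proof. exists X; easy. Qed.

Lemma eventually_and (P Q : R -> Prop) :
  eventually P -> eventually Q -> eventually (fun x => P x /\ Q x).
Proof.
  intros [X HP] [Y HQ]. exists (Rmax X Y). intros x Hx.
  pose proof (Rmax_l X Y). pose proof (Rmax_r X Y).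
  split; [apply HP | apply HQ]; lra.
Qed.

Lemma eventually_mono (P Q : R -> Prop) :
  (forall x, P x -> Q x) -> eventually P -> eventually Q.
Proof. intros HPQ [X HP]. exists X. auto. Qed.

Lemma eventually_ln (P : R -> Prop) : eventually P -> eventually (fun x => P (ln x)).
Proof.
  intros [X HP]. exists (exp X). intros x Hx. apply HP.
  rewrite <- (ln_exp X). apply ln_le_compat; [apply exp_pos | easy].
Qed.

(* The step functions [phi_sequence] defining [RiemannInt] come with error step
   functions [err]; their difference is a minorant. *)
Lemma RiemannInt_step_minorant (h : R -> R) (a b eps : R) (pr : Riemann_integrable h a b) :
  a <= b -> 0 < eps -> exists psi : StepFun a b,
    (forall x, a <= x <= b -> psi x <= h x) /\ RiemannInt pr - eps <= RiemannInt_SF psi.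
Proof.
  intros Hab Heps. unfold RiemannInt.
  destruct (RiemannInt_exists pr RinvN RinvN_cv) as [l Hl].
  destruct (Hl (eps / 2) ltac:(lra)) as [N1 HN1].
  destruct (@RinvN_cv (eps / 2) ltac:(lra)) as [N2 HN2].
  specialize (HN1 (max N1 N2) (Nat.le_max_l _ _)).
  specialize (HN2 (max N1 N2) (Nat.le_max_r _ _)).
  unfold Rdist in HN1, HN2. rewrite Rminus_0_r in HN2.
  destruct (phi_sequence_prop RinvN pr (max N1 N2)) as [err [Herr Hint]].
  exists (mkStepFun (StepFun_P28 (-1) (phi_sequence RinvN pr (max N1 N2)) err)).
  split.
  - intros x Hx. simpl. rewrite Rmin_left, Rmax_right in Herr by lra.
    specialize (Herr x Hx).
    pose proof (Rle_abs (- (h x - phi_sequence RinvN pr (max N1 N2) x))) as Habs.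
    rewrite Rabs_Ropp in Habs. lra.
  - rewrite StepFun_P30.
    apply Rabs_def2 in HN1, HN2, Hint. lra.
Qed.

Lemma inv_continuous_pos (K x : R) : 0 < x -> continuity_pt (fun y => K / y) x.
Proof.
  intros Hx. apply continuity_pt_mult.
  - apply continuity_pt_const. easy.
  - apply (continuity_pt_inv id); [apply derivable_continuous_pt, derivable_pt_id | unfold id; lra].
Qed.

Lemma inv_integrable (K X Y : R) : 0 < X -> X <= Y -> Riemann_integrable (fun y => K / y) X Y.
Proof.
  intros HX HXY. apply continuity_implies_RiemannInt; [easy |].
  intros x Hx. apply inv_continuous_pos. lra.
Qed.

Lemma RiemannInt_inv_lower (K X Y : R) (pr : Riemann_integrable (fun y => K / y) X Y) :
  0 <= K -> 0 < X <= Y -> K / Y * (Y - X) <= RiemannInt pr.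
Proof.
  intros HK HXY. apply (@RiemannInt_const_bound _ _ _ _ (K / X) pr); [lra |].
  intros x Hx. split; apply Rmult_le_compat_l; try easy; apply Rinv_le_contravar; lra.
Qed.

Lemma RiemannInt_inv_dyadic (K X : R) (n : nat)
  (pr : Riemann_integrable (fun y => K / y) X (X * 2 ^ n)) :
  0 <= K -> 0 < X -> INR n * (K / 2) <= RiemannInt pr.
Proof.
  intros HK HX. revert pr. induction n as [| n IH]; intros pr.
  - pose proof (RiemannInt_inv_lower K X (X * 2 ^ 0) pr HK ltac:(simpl; lra)).
    simpl in *. nra.
  - assert (H2n : 1 <= 2 ^ n) by (apply pow_R1_Rle; lra).
    assert (HXn : X <= X * 2 ^ n) by nra.
    assert (HXSn : X * 2 ^ S n = 2 * (X * 2 ^ n)) by (simpl; ring).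
    pose (pr1 := inv_integrable K X (X * 2 ^ n) HX HXn).
    pose (pr2 := inv_integrable K (X * 2 ^ n) (X * 2 ^ S n) ltac:(lra) ltac:(lra)).
    rewrite <- (RiemannInt_P25 pr1 pr2 pr HXn ltac:(lra)).
    pose proof (IH pr1).
    pose proof (RiemannInt_inv_lower K (X * 2 ^ n) (X * 2 ^ S n) pr2 HK ltac:(lra)).
    replace (K / (X * 2 ^ S n) * (X * 2 ^ S n - X * 2 ^ n)) with (K / 2) in *
      by (rewrite HXSn; field; lra).
    rewrite S_INR. lra.
Qed.

Lemma RiemannInt_inv_unbounded (K X M : R) : 0 < K -> 0 < X ->
  exists Y, X <= Y /\ exists pr : Riemann_integrable (fun y => K / y) X Y, M <= RiemannInt pr.
Proof.
  intros HK HX. destruct (INR_archimed (K / 2) M ltac:(lra)) as [n Hn].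
  assert (HXn : X <= X * 2 ^ n) by (pose proof (pow_R1_Rle 2 n ltac:(lra)); nra).
  exists (X * 2 ^ n). split; [easy |].
  exists (inv_integrable K X _ HX HXn).
  pose proof (RiemannInt_inv_dyadic K X n (inv_integrable K X _ HX HXn) ltac:(lra) HX). lra.
Qed.

Lemma divergence_infinite_of_inv_minorant (F g f : R -> R) (K : R) : 0 < K ->
  eventually (fun x => K / x <= F (g x / f x) * f x) -> divergence_infinite F g f.
Proof.
  intros HK [X HX] M. set (X0 := Rmax X 1).
  assert (HX0 : 0 < X0) by (pose proof (Rmax_r X 1); unfold X0; lra).
  destruct (RiemannInt_inv_unbounded K X0 (M + 1) HK HX0) as [Y [HY [pr Hpr]]].
  destruct (RiemannInt_step_minorant _ _ _ 1 pr HY Rlt_0_1) as [psi [Hpsi Hint]].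
  exists X0, Y. repeat split; try lra. exists psi. split; [| lra].
  intros x Hx. eapply Rle_trans; [now apply Hpsi |].
  apply HX. pose proof (Rmax_l X 1). unfold X0 in Hx. lra.
Qed.

Lemma right_inverse_monotone (Phi Phiinv : R -> R) (xbar : R) :
  (forall x y, xbar <= x -> x < y -> Phi x < Phi y) ->
  (forall y, Phi xbar <= y -> xbar <= Phiinv y /\ Phi (Phiinv y) = y) ->
  forall y1 y2, Phi xbar <= y1 -> y1 <= y2 -> Phiinv y1 <= Phiinv y2.
Proof.
  intros Hincr Hinv y1 y2 H1 H12.
  destruct (Hinv y1 H1) as [Hx1 HPhi1], (Hinv y2 ltac:(lra)) as [Hx2 HPhi2].
  destruct (Rle_or_lt (Phiinv y1) (Phiinv y2)) as [Hle | Hlt]; [easy |].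
  specialize (Hincr _ _ Hx2 Hlt). lra.
Qed.

Lemma right_derivative_nonneg (f : R -> R) (x d : R) :
  (forall h, 0 < h -> f x <= f (x + h)) ->
  (forall eps, 0 < eps -> exists delta, 0 < delta /\ forall h, 0 < h < delta ->
       Rabs ((f (x + h) - f x) / h - d) < eps) ->
  0 <= d.
Proof.
  intros Hincr Hder. destruct (Rle_or_lt 0 d) as [Hd | Hd]; [easy | exfalso].
  destruct (Hder (- d) ltac:(lra)) as [delta [Hdelta Hq]].
  specialize (Hq (delta / 2) ltac:(lra)). apply Rabs_def2 in Hq.
  assert (0 <= (f (x + delta / 2) - f x) / (delta / 2)).
  { apply Rmult_le_pos; [| left; apply Rinv_0_lt_compat; lra].
    specialize (Hincr (delta / 2) ltac:(lra)). lra. }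
  lra.
Qed.

Definition FPhi_slope (Phi Phiinv : R -> R) (xbar dPi theta : R) : R :=
  (1 + Phi xbar) / (rpow (Phiinv (Phi xbar)) theta
                    + theta * rpow (Phiinv (Phi xbar)) (theta - 1) * dPi).

Definition FPhi_offset (Phi Phiinv : R -> R) (xbar dPi theta : R) : R :=
  exp (Phi xbar) * Phi xbar
  - FPhi_slope Phi Phiinv xbar dPi theta * exp (Phi xbar) * rpow (Phiinv (Phi xbar)) theta.

Lemma FPhi_above (Phi Phiinv : R -> R) (xbar dPi theta y : R) : exp (Phi xbar) < y ->
  FPhi Phi Phiinv xbar dPi theta y =
  FPhi_slope Phi Phiinv xbar dPi theta * y * rpow (Phiinv (ln y)) theta
  + FPhi_offset Phi Phiinv xbar dPi theta.
Proof.
  intros Hy. unfold FPhi. cbv zeta. rewrite ln_exp.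
  destruct (Rle_dec y (exp (Phi xbar))); [lra | easy].
Qed.

Lemma FPhi_slope_pos (Phi Phiinv : R -> R) (xbar dPi theta : R) :
  0 < Phi xbar -> 0 < Phiinv (Phi xbar) -> 0 <= theta -> 0 <= dPi ->
  0 < FPhi_slope Phi Phiinv xbar dPi theta.
Proof.
  intros HP Hp0 Htheta HdPi. unfold FPhi_slope. rewrite !rpow_Rpower by easy.
  apply Rdiv_lt_0_compat; [lra |].
  pose proof (Rpower_pos (Phiinv (Phi xbar)) theta).
  pose proof (Rpower_pos (Phiinv (Phi xbar)) (theta - 1)).
  assert (0 <= theta * Rpower (Phiinv (Phi xbar)) (theta - 1) * dPi)
    by (apply Rmult_le_pos; [apply Rmult_le_pos |]; lra).
  lra.
Qed.

Lemma main_term_lower (a c c' s t theta x gx Q : R) :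
  0 < a -> 0 < c -> 0 < c' -> 0 <= theta -> t <= s * theta -> 1 <= x ->
  c * Rpower x (- (t + 1)) <= gx -> c' * Rpower x s <= Q ->
  a * c * Rpower c' theta / x <= a * gx * Rpower Q theta.
Proof.
  intros Ha Hc Hc' Htheta Hts Hx Hg HQ.
  assert (HQtheta : Rpower c' theta * Rpower x (s * theta) <= Rpower Q theta).
  { rewrite <- Rpower_mult, Rpower_mult_distr by (try apply Rpower_pos; lra).
    apply Rle_Rpower_l; [easy |]. split; [| easy].
    apply Rmult_lt_0_compat; [easy | apply Rpower_pos]. }
  assert (Hpow : / x <= Rpower x (- (t + 1)) * Rpower x (s * theta)).
  { rewrite <- Rpower_plus, <- (Rpower_1 x), <- Rpower_Ropp, Rpower_1 by lra.
    apply Rle_Rpower; lra. }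
  pose proof (Rpower_pos c' theta). pose proof (Rpower_pos x (s * theta)).
  pose proof (Rpower_pos x (- (t + 1))).
  apply Rle_trans with (a * (c * Rpower x (- (t + 1))) * (Rpower c' theta * Rpower x (s * theta))).
  - unfold Rdiv. rewrite !Rmult_assoc. apply Rmult_le_compat_l; [lra |].
    apply Rmult_le_compat_l; [lra |]. nra.
  - apply Rmult_le_compat; try easy.
    + apply Rmult_le_pos; [lra |]. apply Rmult_le_pos; lra.
    + apply Rmult_le_pos; lra.
    + apply Rmult_le_compat_l; lra.
Qed.

Lemma remainder_lower (b K x phix : R) :
  0 < K -> 1 <= x -> 2 * ln x <= phix -> 2 * Rabs b <= K * x ->
  - (K / 2) / x <= b * exp (- phix).
Proof.
  intros HK Hx Hphi Hb.
  assert (Hexp : exp (- phix) <= / x * / x).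
  { rewrite <- (exp_ln x), <- exp_Ropp, <- exp_plus by lra. apply exp_le_compat. lra. }
  assert (Habs : Rabs b * exp (- phix) <= K / 2 / x).
  { apply Rle_trans with (K * x / 2 * (/ x * / x)).
    - apply Rmult_le_compat; try lra; [apply Rabs_pos | left; apply exp_pos].
    - right. field. lra. }
  pose proof (Rle_abs (- b)) as Hb'. rewrite Rabs_Ropp in Hb'.
  pose proof (exp_pos (- phix)).
  replace (- (K / 2) / x) with (- (K / 2 / x)) by (field; lra). nra.
Qed.

Lemma density_ratio_lower (c t x gx phix : R) :
  0 < x -> 1 <= c * x -> c * Rpower x (- (t + 1)) <= gx ->
  exp (phix - (t + 2) * ln x) <= gx / exp (- phix).
Proof.
  intros Hx Hcx Hg.
  replace (exp (phix - (t + 2) * ln x)) with (Rpower x (- (t + 1)) / x / exp (- phix)).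
  - apply Rmult_le_compat_r; [left; apply Rinv_0_lt_compat, exp_pos |].
    apply Rle_trans with (c * Rpower x (- (t + 1))); [| easy].
    pose proof (Rpower_pos x (- (t + 1))).
    apply (Rmult_le_reg_r x); [easy |]. unfold Rdiv.
    rewrite Rmult_assoc, Rinv_l by lra. nra.
  - unfold Rpower. rewrite <- (exp_ln x) at 2 by easy.
    unfold Rdiv. rewrite <- !exp_Ropp, <- !exp_plus.
    f_equal. ring.
Qed.

Lemma rpow_mul_lower (c x p h : R) : 0 < x -> c <= rpow x p * h -> c * Rpower x (- p) <= h.
Proof.
  intros Hx H. rewrite rpow_Rpower in H by easy. rewrite Rpower_Ropp.
  pose proof (Rpower_pos x p). apply (Rmult_le_reg_l (Rpower x p)); [easy |].
  rewrite <- Rmult_assoc, (Rmult_comm _ c), Rmult_assoc, Rinv_r by lra. lra.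
Qed.

Lemma rpow_div_lower (c x p h : R) : 0 < x -> c <= h / rpow x p -> c * Rpower x p <= h.
Proof.
  intros Hx H. rewrite rpow_Rpower in H by easy.
  pose proof (Rpower_pos x p). apply (Rmult_le_compat_r (Rpower x p)) in H; [| lra].
  unfold Rdiv in H. rewrite Rmult_assoc, Rinv_l in H by lra. lra.
Qed.

Section ClassIIDivergence.

Variables (phi Phi Phiinv g : R -> R) (xbar dPi theta t : R).

Hypothesis phi_superlog : lim_infty_infty (fun x => phi x / ln x).
Hypothesis xbar_pos : 0 < xbar.
Hypothesis Phi_xbar_pos : 0 < Phi xbar.
Hypothesis Phi_increasing : forall x y, xbar <= x -> x < y -> Phi x < Phi y.
Hypothesis Phiinv_right_inverse :
  forall y, Phi xbar <= y -> xbar <= Phiinv y /\ Phi (Phiinv y) = y.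
Hypothesis Phiinv_right_derivative :
  forall eps, 0 < eps -> exists delta, 0 < delta /\ forall h, 0 < h < delta ->
    Rabs ((Phiinv (Phi xbar + h) - Phiinv (Phi xbar)) / h - dPi) < eps.
Hypothesis t_bounds : 0 < t < theta.
Hypothesis Phiinv_growth : forall alpha s, 0 <= alpha -> 0 < s < 1 ->
  liminf_pos (fun x => Phiinv (phi x - alpha * ln x) / rpow x s).
Hypothesis g_tail : liminf_pos (fun x => rpow x (t + 1) * g x).

Let a := FPhi_slope Phi Phiinv xbar dPi theta.
Let b := FPhi_offset Phi Phiinv xbar dPi theta.
Let F := FPhi Phi Phiinv xbar dPi theta.

Lemma FPhi_slope_pos_class_ii : 0 < a.
Proof.
  pose proof (right_inverse_monotone _ _ _ Phi_increasing Phiinv_right_inverse) as Hmono.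
  apply FPhi_slope_pos; [easy | | lra |].
  - destruct (Phiinv_right_inverse (Phi xbar)); lra.
  - apply (right_derivative_nonneg Phiinv (Phi xbar)); [| easy].
    intros h Hh. apply Hmono; lra.
Qed.

Lemma FPhi_integrand_lower (c c' s x : R) :
  0 < c -> 0 < c' -> t <= s * theta -> 1 <= x ->
  1 <= c * x -> Phi xbar < ln x -> 2 * Rabs b <= a * c * Rpower c' theta * x ->
  c * Rpower x (- (t + 1)) <= g x -> (t + 3) * ln x <= phi x ->
  c' * Rpower x s <= Phiinv (phi x - (t + 2) * ln x) ->
  a * c * Rpower c' theta / 2 / x <= F (g x / exp (- phi x)) * exp (- phi x).
Proof.
  intros Hc Hc' Hts Hx Hcx HP0 Hb Hg Hphi HPhiinv.
  pose proof FPhi_slope_pos_class_ii as Ha.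
  assert (Hlnx : 0 <= ln x) by (rewrite <- ln_1; apply ln_le_compat; lra).
  set (u := phi x - (t + 2) * ln x) in *.
  set (y := g x / exp (- phi x)).
  assert (Hy : exp u <= y) by (apply (density_ratio_lower c t); lra).
  assert (Hlny : u <= ln y) by (rewrite <- (ln_exp u); apply ln_le_compat; [apply exp_pos | easy]).
  assert (HyP0 : exp (Phi xbar) < y)
    by (eapply Rlt_le_trans; [apply exp_increasing | exact Hy]; unfold u; nra).
  assert (HQ : c' * Rpower x s <= Phiinv (ln y)).
  { eapply Rle_trans; [exact HPhiinv |].
    apply (right_inverse_monotone _ _ _ Phi_increasing Phiinv_right_inverse); unfold u in *; nra. }
  assert (Hgy : g x = y * exp (- phi x)).
  { unfold y, Rdiv. rewrite Rmult_assoc, Rinv_l; [ring | apply Rgt_not_eq, exp_pos]. }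
  unfold F. rewrite FPhi_above by easy. fold a b.
  rewrite Rmult_plus_distr_r.
  replace (a * y * rpow (Phiinv (ln y)) theta * exp (- phi x))
    with (a * g x * Rpower (Phiinv (ln y)) theta).
  2:{ assert (0 < Phiinv (ln y)).
      { eapply Rlt_le_trans; [| exact HQ]. apply Rmult_lt_0_compat; [easy | apply Rpower_pos]. }
      rewrite rpow_Rpower, Hgy by easy. ring. }
  pose proof (main_term_lower a c c' s t theta x (g x) (Phiinv (ln y))
                Ha Hc Hc' ltac:(lra) Hts Hx Hg HQ).
  assert (HK : 0 < a * c * Rpower c' theta)
    by (apply Rmult_lt_0_compat; [nra | apply Rpower_pos]).
  pose proof (remainder_lower b _ x (phi x) HK Hx ltac:(nra) Hb).
  replace (a * c * Rpower c' theta / 2 / x)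
    with (a * c * Rpower c' theta / x + - (a * c * Rpower c' theta / 2) / x) by (field; lra).
  lra.
Qed.

Theorem FPhi_divergence_infinite : divergence_infinite F g (fun x => exp (- phi x)).
Proof.
  destruct g_tail as [c [Hc Hg_ev]].
  set (s := (t / theta + 1) / 2).
  assert (Hs : 0 < s < 1 /\ t <= s * theta).
  { assert (0 < t / theta < 1).
    { split; [apply Rdiv_lt_0_compat; lra |].
      apply (Rmult_lt_reg_r theta); [lra |]. unfold Rdiv. rewrite Rmult_assoc, Rinv_l; lra. }
    unfold s. replace ((t / theta + 1) / 2 * theta) with ((t + theta) / 2) by (field; lra).
    lra. }
  destruct (Phiinv_growth (t + 2) s ltac:(lra) (proj1 Hs)) as [c' [Hc' HPhiinv_ev]].
  set (K := a * c * Rpower c' theta).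
  assert (HK : 0 < K).
  { pose proof FPhi_slope_pos_class_ii.
    apply Rmult_lt_0_compat; [apply Rmult_lt_0_compat |]; auto using Rpower_pos. }
  apply (divergence_infinite_of_inv_minorant _ _ _ (K / 2)); [lra |].
  pose proof (eventually_and _ _ (eventually_ge 1)
    (eventually_and _ _ (eventually_ge (/ c))
    (eventually_and _ _ (eventually_ge (2 * Rabs b / K))
    (eventually_and _ _ (eventually_ln _ (eventually_ge (Phi xbar + 1)))
    (eventually_and _ _ Hg_ev
    (eventually_and _ _ (phi_superlog (t + 3)) HPhiinv_ev)))))) as Hev.
  refine (eventually_mono _ _ _ Hev). cbv beta.
  intros x (Hx & Hcx & Hbx & HlnX & Hgx & Hphix & HPhiinvx).
  assert (Hlnx : 0 < ln x) by lra.
  apply (FPhi_integrand_lower c c' s); try tauto.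
  - rewrite <- (Rinv_r c) by lra. apply Rmult_le_compat_l; lra.
  - lra.
  - apply (Rmult_le_compat_r K) in Hbx; [| lra].
    unfold Rdiv in Hbx. rewrite Rmult_assoc, Rinv_l in Hbx by lra. fold K. lra.
  - apply rpow_mul_lower; lra.
  - apply (Rmult_lt_compat_r (ln x)) in Hphix; [| easy].
    unfold Rdiv in Hphix. rewrite Rmult_assoc, Rinv_l in Hphix by lra. lra.
  - apply rpow_div_lower; [lra | easy].
Qed.

End ClassIIDivergence.

(* For [u <= 0], [rpow u r] is the junk value [0] or [1], since [ln] vanishes there. *)
Lemma le_of_rpow_ge (u w r : R) : 0 < r -> 0 < w -> 1 + rpow w r <= rpow u r -> w <= u.
Proof.
  intros Hr Hw H. rewrite (rpow_Rpower w) in H by easy.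
  pose proof (Rpower_pos w r).
  destruct (Rle_or_lt w u) as [Hwu | Huw]; [easy | exfalso].
  destruct (Rle_or_lt u 0) as [Hu | Hu].
  - assert (rpow u r <= 1); [| lra].
    unfold rpow. destruct (Req_EM_T u 0); [lra |].
    unfold Rpower. replace (ln u) with 0.
    + rewrite Rmult_0_r, exp_0. lra.
    + unfold ln. case (Rlt_dec 0 u); intros Hu'; [exfalso; lra | easy].
  - rewrite rpow_Rpower in H by easy.
    pose proof (Rlt_Rpower_l u w r Hr ltac:(lra)). lra.
Qed.

Lemma power_gap_dominates_linear (r s mu C D : R) : 1 < r -> 0 < s < 1 ->
  eventually (fun v => C + D * v + rpow (s * v) r <= rpow (Rabs (v - mu)) r).
Proof.
  intros Hr Hs. set (s2 := (1 + s) / 2).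
  set (q := Rpower s2 r - Rpower s r).
  assert (Hq : 0 < q) by (pose proof (Rlt_Rpower_l s s2 r ltac:(lra) ltac:(unfold s2; lra)); unfold q; lra).
  set (L := (Rabs C + Rabs D) / q + 1).
  assert (HL : (Rabs C + Rabs D) <= q * (L - 1)).
  { unfold L. right. field. lra. }
  pose proof (eventually_and _ _ (eventually_ge 1)
    (eventually_and _ _ (eventually_ge (Rabs mu / (1 - s2)))
                        (eventually_ge (Rpower L (/ (r - 1)))))) as Hev.
  refine (eventually_mono _ _ _ Hev). cbv beta.
  intros v (Hv & Hvmu & HvL).
  assert (Hmu : s2 * v <= v - mu).
  { apply (Rmult_le_compat_l (1 - s2)) in Hvmu; [| unfold s2; lra].
    replace ((1 - s2) * (Rabs mu / (1 - s2))) with (Rabs mu) in Hvmu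
      by (field; unfold s2; lra).
    pose proof (Rle_abs mu). lra. }
  assert (Hpow : L <= Rpower v (r - 1)).
  { assert (HL0 : 0 < L).
    { unfold L. pose proof (Rabs_pos C). pose proof (Rabs_pos D).
      assert (0 <= (Rabs C + Rabs D) / q) by (apply Rmult_le_pos; [lra | left; apply Rinv_0_lt_compat, Hq]).
      lra. }
    replace L with (Rpower (Rpower L (/ (r - 1))) (r - 1))
      by (rewrite Rpower_mult, Rinv_l, Rpower_1 by lra; easy).
    apply Rle_Rpower_l; [lra |]. split; [apply Rpower_pos | easy]. }
  assert (Hvr : Rpower v r = v * Rpower v (r - 1)).
  { rewrite <- (Rpower_1 v) at 2 by lra. rewrite <- Rpower_plus. f_equal. ring. }
  rewrite Rabs_right, !rpow_Rpower, <- !Rpower_mult_distr by (unfold s2 in *; nra).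
  assert (Rpower s2 r * Rpower v r <= Rpower (v - mu) r).
  { rewrite Rpower_mult_distr by (unfold s2; lra).
    apply Rle_Rpower_l; [lra |]. split; [unfold s2; nra | easy]. }
  assert (v * L <= Rpower v r) by (rewrite Hvr; apply Rmult_le_compat_l; lra).
  assert (Hlin : C + D * v <= q * (v * L)).
  { pose proof (Rle_abs C). pose proof (Rabs_pos C). pose proof (Rle_abs D).
    assert (D * v <= Rabs D * v) by (apply Rmult_le_compat_r; lra).
    assert ((Rabs C + Rabs D) * v <= q * (L - 1) * v) by (apply Rmult_le_compat_r; lra).
    nra. }
  assert (q * (v * L) <= q * Rpower v r) by (apply Rmult_le_compat_l; lra).
  unfold q in *. lra.
Qed.

Lemma rpow_nonneg (u p : R) : 0 <= rpow u p.
Proof. unfold rpow. destruct (Req_EM_T u 0); [lra | left; apply Rpower_pos]. Qed.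

Lemma lognormal_potential (k r mu Z x : R) : 0 < Z -> 0 < x ->
  - ln (/ (Z * x) * exp (- k * rpow (Rabs (ln x - mu)) r))
  = ln Z + ln x + k * rpow (Rabs (ln x - mu)) r.
Proof.
  intros HZ Hx. assert (0 < Z * x) by (apply Rmult_lt_0_compat; easy).
  rewrite ln_mult, ln_Rinv, ln_mult, ln_exp by auto using Rinv_0_lt_compat, exp_pos. ring.
Qed.

Theorem lognormal_Phiinv_growth (r sigma mu Z xbar : R) (Phiinv : R -> R) :
  1 < r -> 0 < sigma -> 0 < Z -> 0 < xbar ->
  let f := fun x => / (Z * x) *
             exp (- (/ (r * rpow sigma r)) * rpow (Rabs (ln x - mu)) r) in
  let phi := fun x => - ln (f x) in
  let Phi := fun x => / (r * rpow sigma r) * rpow (ln x) r in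
  (forall y, Phi xbar <= y -> xbar <= Phiinv y /\ Phi (Phiinv y) = y) ->
  forall alpha s, 0 <= alpha -> 0 < s < 1 ->
    liminf_pos (fun x => Phiinv (phi x - alpha * ln x) / rpow x s).
Proof.
  intros Hr Hsigma HZ Hxbar f phi Phi HPhiinv alpha s Halpha Hs.
  unfold phi, f, Phi in *. set (k := / (r * rpow sigma r)) in *.
  assert (Hk : 0 < k).
  { apply Rinv_0_lt_compat, Rmult_lt_0_compat; [lra |].
    rewrite rpow_Rpower by easy. apply Rpower_pos. }
  set (PX := k * rpow (ln xbar) r) in *.
  pose proof (power_gap_dominates_linear r s mu (1 + (Rabs PX - ln Z) / k) ((alpha - 1) / k) Hr Hs)
    as Hgap.
  exists 1. split; [lra |].
  refine (eventually_mono _ _ _ (eventually_and _ _ (eventually_ge 1)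
            (eventually_ln _ (eventually_and _ _ (eventually_ge 1) Hgap)))). cbv beta.
  intros x (Hx & Hlnx & Hgapx).
  rewrite lognormal_potential by lra.
  set (y := ln Z + ln x + k * rpow (Rabs (ln x - mu)) r - alpha * ln x).
  assert (Hy : k * (1 + rpow (s * ln x) r) + Rabs PX <= y).
  { apply (Rmult_le_compat_l k) in Hgapx; [| lra].
    replace (k * (1 + (Rabs PX - ln Z) / k + (alpha - 1) / k * ln x + rpow (s * ln x) r))
      with (k * (1 + rpow (s * ln x) r) + Rabs PX - ln Z + (alpha - 1) * ln x)
      in Hgapx by (field; lra).
    unfold y. lra. }
  assert (HPX : PX <= y).
  { pose proof (Rle_abs PX). pose proof (rpow_nonneg (s * ln x) r). nra. }
  destruct (HPhiinv y HPX) as [HP HPhi].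
  assert (Hsx : s * ln x <= ln (Phiinv y)).
  { apply (le_of_rpow_ge _ _ r); [lra | nra |].
    apply (Rmult_le_reg_l k); [easy |]. pose proof (Rabs_pos PX). lra. }
  rewrite rpow_Rpower by lra.
  pose proof (Rpower_pos x s).
  apply (Rmult_le_reg_r (Rpower x s)); [easy |].
  unfold Rdiv. rewrite Rmult_assoc, Rinv_l, Rmult_1_l, Rmult_1_r by lra.
  rewrite <- (exp_ln (Phiinv y)) by lra. apply exp_le_compat. lra.
Qed.

Theorem mainTheorem8 :
  (forall (phi Phi Phiinv g : R -> R) (xbar dPi theta t : R),
      class_ii phi Phi Phiinv xbar dPi ->
      1 < theta ->
      (forall alpha s, 0 <= alpha -> 0 < s < 1 ->
         liminf_pos (fun x => Phiinv (phi x - alpha * ln x) / rpow x s)) ->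
      (forall x, 0 < x -> 0 <= g x) ->
      1 < t < theta ->
      liminf_pos (fun x => rpow x (t + 1) * g x) ->
      divergence_infinite (FPhi Phi Phiinv xbar dPi theta) g
                          (fun x => exp (- phi x)))
  /\
  (forall (r sigma mu Z xbar : R) (Phiinv : R -> R),
      1 < r -> 0 < sigma -> 0 < Z -> 0 < xbar ->
      let f := fun x => / (Z * x) *
                 exp (- (/ (r * rpow sigma r)) * rpow (Rabs (ln x - mu)) r) in
      let phi := fun x => - ln (f x) in
      let Phi := fun x => / (r * rpow sigma r) * rpow (ln x) r in
      (forall y, Phi xbar <= y -> xbar <= Phiinv y /\ Phi (Phiinv y) = y) ->
      forall alpha s, 0 <= alpha -> 0 < s < 1 ->
        liminf_pos (fun x => Phiinv (phi x - alpha * ln x) / rpow x s)).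
Proof.
  split.
  - intros phi Phi Phiinv g xbar dPi theta t Hclass _ Hgrowth _ Ht Hg.
    destruct Hclass as (_ & Hsuperlog & Hxbar & HPhipos & Hincr & _ & _ & Hinv & Hder & _).
    apply (FPhi_divergence_infinite phi Phi Phiinv g xbar dPi theta t); auto.
    + apply HPhipos. lra.
    + lra.
  - exact lognormal_Phiinv_growth.
Qed.
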